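(* Let $G=(V,E)$ be a finite graph. (i) For every $z>0$ the fixed point equation $\mathbf{X}=z\mathcal{R}_G(\mathbf{X})$ on $[0,\infty)^{\vec E}$ has a unique solution $\mathbf{Y}(z)\in(0,\infty)^{\vec E}$, and it is attractive: the iterates $\mathbf{X}^0=0$, $\mathbf{X}^{t+1}=z\mathcal{R}_G(\mathbf{X}^t)$ converge to $\mathbf{Y}(z)$. (ii) The map $z\mapsto\mathbf{Y}(z)$ is non-decreasing and $z\mapsto\mathbf{Y}(z)/z$ is non-increasing on $(0,\infty)$ (componentwise). (iii) If moreover $G$ is a tree, then for every $e\in E$ and either orientation $\vec e$ of $e$, $$\mu^z_G(B_e=1)=\frac{Y_{\vec e}(z)\mathcal{R}_{-\vec e}(\mathbf{Y}(z))}{1+Y_{\vec e}(z)\mathcal{R}_{-\vec e}(\mathbf{Y}(z))}.$$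
   Context: $\vec E$: directed edges of $G$ ($u\to v$, $v\to u$ per edge $uv$), $-\vec e$ the reverse of $\vec e$; $\partial u$: neighbours of $u$; empty sums are $0$. $\mathcal{R}_G:[0,\infty)^{\vec E}\to[0,1]^{\vec E}$ is defined by $\mathcal{R}_G(\mathbf{X})_{u\to v}=\mathcal{R}_{u\to v}(\mathbf{X})=1/(1+\sum_{w\in\partial u\setminus v}X_{w\to u})$, and $z\mathcal{R}_G$ multiplies each component by $z$. Comparisons of vectors are componentwise. The Gibbs measure on matchings ($\mathbf{B}\in\{0,1\}^E$ with at most one edge of $\mathbf{B}$ at each vertex) is $\mu^z_G(\mathbf{B})=z^{\sum_eB_e}/P_G(z)$, $P_G(z)$ the normalising constant. *)

From Stdlib Require Import Reals.
From mathcomp Require Import all_boot.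

Set Implicit Arguments.
Unset Strict Implicit.
Unset Printing Implicit Defensive.

Local Open Scope R_scope.

Definition simple_graph (T : finType) (adj : rel T) : Prop :=
  (forall u v, adj u v = adj v u) /\ (forall u, adj u u = false).

(* Vectors indexed by directed edges u -> v are functions X : T -> T -> R,
   X u v = X_{u -> v}; only their values on directed edges (adj u v) matter. *)

Definition Rmap (T : finType) (adj : rel T) (X : T -> T -> R) (u v : T) : R :=
  1 / (1 + \big[Rplus/0]_(w | adj u w && (w != v)) X w u).

Definition zRmap (T : finType) (adj : rel T) (z : R) (X : T -> T -> R)
  : T -> T -> R := fun u v => z * Rmap adj X u v.

Fixpoint BP_iter (T : finType) (adj : rel T) (z : R) (t : nat) : T -> T -> R :=
  match t with
  | O => fun _ _ => 0
  | S t' => zRmap adj z (BP_iter adj z t')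
  end.

Definition is_edge (T : finType) (adj : rel T) (e : {set T}) : bool :=
  [exists u, exists v, adj u v && (e == [set u; v])].

Definition is_matching (T : finType) (adj : rel T) (M : {set {set T}}) : bool :=
  [forall e in M, is_edge adj e] &&
  [forall x, (#|[set e in M | x \in e]| <= 1)%N].

Definition matching_poly (T : finType) (adj : rel T) (z : R) : R :=
  \big[Rplus/0]_(M : {set {set T}} | is_matching adj M) z ^ #|M|.

Definition edge_prob (T : finType) (adj : rel T) (z : R) (e : {set T}) : R :=
  (\big[Rplus/0]_(M : {set {set T}} | is_matching adj M && (e \in M)) z ^ #|M|)
  / matching_poly adj z.

Definition connected_graph (T : finType) (adj : rel T) : Prop :=
  forall u v : T, connect adj u v.

Definition has_cycle (T : finType) (adj : rel T) : Prop :=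
  exists s : seq T, [/\ uniq s, (3 <= size s)%N & cycle adj s].

Definition is_tree (T : finType) (adj : rel T) : Prop :=
  connected_graph adj /\ ~ has_cycle adj.

(* Messages are vectors X indexed by directed edges and F = z R_G.  F is
   antitone, so F o F is monotone and the iterates X^t = F^t(0) satisfy
   X^0 <= X^2 <= ... <= Y <= ... <= X^3 <= X^1 for every non-negative fixed
   point Y of F ("Y is sandwiched at every level t").  A contraction estimate
   (1 - q^t) X^(2t+1) <= X^(2t), with q = M/(1+M) and M = |V| z, makes the gap
   between odd and even iterates geometrically small.  Hence the iterates
   converge, their limit is a positive fixed point, and every non-negative
   fixed point equals it: part (i).  Part (ii) is proved for the iterates by
   induction on t and passes to the limit.

   For part (iii), Zavoid S is the partition function of the matchings
   avoiding the vertex set S.  It satisfies a recursion on a vertex u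
   (Zavoid_vertex) and factorises over any union of components of G - S
   (Zavoid_factor).  In a tree, distinct neighbours of u lie in distinct
   components of G - u (tree_factor); therefore the messages
   z Zavoid {u,v} / Zavoid {v} form a positive fixed point, so they are Y(z),
   and the edge marginal z Zavoid {u,v} / Zavoid {} is expressed through them. *)

From Pilot Require Import Defs.
From HB Require Import structures.
From Stdlib Require Import Reals Lra Psatz ClassicalEpsilon.
From mathcomp Require Import all_boot zify.
Local Open Scope R_scope.
Set Implicit Arguments. Unset Strict Implicit.

(* (R, +, 0) and (R, *, 1) as commutative monoids with * distributing over +,
   so that the generic bigop lemmas apply to the sums of Defs. *)
HB.instance Definition _ := Monoid.isComLaw.Build R 0 Rplus
  (fun a b c => esym (Rplus_assoc a b c)) Rplus_comm Rplus_0_l.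
HB.instance Definition _ := Monoid.isComLaw.Build R 1 Rmult
  (fun a b c => esym (Rmult_assoc a b c)) Rmult_comm Rmult_1_l.
HB.instance Definition _ := Monoid.isMulLaw.Build R 0 Rmult Rmult_0_l Rmult_0_r.
HB.instance Definition _ :=
  Monoid.isAddLaw.Build R Rmult Rplus Rmult_plus_distr_r Rmult_plus_distr_l.

Lemma cv_const (c : R) : Un_cv (fun _ => c) c.
Proof. by move=> eps heps; exists 0%nat => n _; rewrite /Rdist Rminus_diag Rabs_R0. Qed.

Lemma frac_le x y c d : 0 < c -> 0 < d -> x * d <= y * c -> x * (1 / c) <= y * (1 / d).
Proof.
move=> hc hd h.
have -> : x * (1 / c) = (x * d) * / (c * d) by field; lra.
have -> : y * (1 / d) = (y * c) * / (c * d) by field; lra.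
apply: Rmult_le_compat_r => //; left; apply: Rinv_0_lt_compat; nra.
Qed.

Section Messages.
Variables (T : finType) (adj : rel T).
Hypothesis adj_sym : forall u v, adj u v = adj v u.

Definition in_sum (X : T -> T -> R) (u v : T) : R :=
  \big[Rplus/0]_(w | adj u w && (w != v)) X w u.

Lemma RmapE X u v : Rmap adj X u v = 1 / (1 + in_sum X u v).
Proof. by []. Qed.

Definition msg_nonneg (X : T -> T -> R) : Prop := forall a b, adj a b -> 0 <= X a b.
Definition msg_le (X Y : T -> T -> R) : Prop := forall a b, adj a b -> X a b <= Y a b.

Lemma in_sum_nonneg X : msg_nonneg X -> forall u v, 0 <= in_sum X u v.
Proof.
move=> HX u v; apply: big_ind => //; [lra | move=> x y; lra |].
by move=> w /andP [huw _]; apply: HX; rewrite adj_sym.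
Qed.

Lemma in_sum_scale X Y c d : (forall a b, adj a b -> c * X a b <= d * Y a b) ->
  forall u v, c * in_sum X u v <= d * in_sum Y u v.
Proof.
move=> HXY u v; apply: (big_ind2 (fun x y => c * x <= d * y)); [lra | move=> *; nra |].
by move=> w /andP [huw _]; apply: HXY; rewrite adj_sym.
Qed.

Lemma in_sum_le X Y : msg_le X Y -> forall u v, in_sum X u v <= in_sum Y u v.
Proof.
move=> HXY u v; rewrite -(Rmult_1_l (in_sum X u v)) -(Rmult_1_l (in_sum Y u v)).
by apply: in_sum_scale => a b hab; rewrite !Rmult_1_l; apply: HXY.
Qed.

Lemma Rmap_ext X Y : (forall a b, adj a b -> X a b = Y a b) ->
  forall u v, Rmap adj X u v = Rmap adj Y u v.
Proof.
move=> HXY u v; rewrite !RmapE; congr (1 / (1 + _)).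
by apply: eq_bigr => w /andP [huw _]; apply: HXY; rewrite adj_sym.
Qed.

Lemma Rmap_bounds X u v : msg_nonneg X -> 0 < Rmap adj X u v <= 1.
Proof.
move=> HX; rewrite RmapE; have := in_sum_nonneg HX u v => hs; split.
- by apply: Rdiv_lt_0_compat; lra.
- by rewrite /Rdiv Rmult_1_l -Rinv_1; apply: Rinv_le_contravar; lra.
Qed.

Lemma Rmap_anti X Y u v : msg_nonneg X -> msg_le X Y -> Rmap adj Y u v <= Rmap adj X u v.
Proof.
move=> HX HXY; rewrite !RmapE /Rdiv !Rmult_1_l.
have := in_sum_nonneg HX u v; have := in_sum_le HXY u v => h1 h2.
by apply: Rinv_le_contravar; lra.
Qed.

Section FixedActivity.
Variable z : R.
Hypothesis z_pos : 0 < z.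

Local Notation F := (zRmap adj z).
Local Notation X := (BP_iter adj z).

Lemma F_bounds Y u v : msg_nonneg Y -> 0 < F Y u v <= z.
Proof. by move=> HY; have := Rmap_bounds u v HY; rewrite /zRmap; nra. Qed.

Lemma F_anti Y Y' u v : msg_nonneg Y -> msg_le Y Y' -> F Y' u v <= F Y u v.
Proof. by move=> HY HYY; have := Rmap_anti u v HY HYY; rewrite /zRmap; nra. Qed.

Lemma iter_bounds t u v : 0 <= X t u v <= z.
Proof.
elim: t u v => [|t IH] u v /=; first lra.
by have := @F_bounds (X t) u v (fun a b _ => proj1 (IH a b)); lra.
Qed.

Lemma iter_nonneg t : msg_nonneg (X t).
Proof. by move=> a b _; case: (iter_bounds t a b). Qed.

Definition sandwiched (t : nat) (Y : T -> T -> R) : Prop :=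
  forall a b, adj a b -> X t.*2 a b <= Y a b <= X t.*2.+1 a b.

Lemma sandwiched_nonneg t Y : sandwiched t Y -> msg_nonneg Y.
Proof. by move=> HY a b hab; have := HY a b hab; have := iter_bounds t.*2 a b; lra. Qed.

(* Since F is antitone, F o F is monotone and preserves the sandwich,
   moving it one level up. *)
Lemma sandwiched_FF t Y : sandwiched t Y -> sandwiched t.+1 (F (F Y)).
Proof.
move=> HY a b hab; have HYn := sandwiched_nonneg HY.
have lo : msg_le (X t.*2) Y by move=> ? ? h; case: (HY _ _ h).
have hi : msg_le Y (X t.*2.+1) by move=> ? ? h; case: (HY _ _ h).
have FY_nonneg : msg_nonneg (F Y) by move=> a' b' _; have := F_bounds a' b' HYn; lra.
have Fhi_nonneg : msg_nonneg (F (X t.*2.+1)).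
  by move=> a' b' _; have := F_bounds a' b' (iter_nonneg t.*2.+1); lra.
split.
- change (F (F (X t.*2)) a b <= F (F Y) a b).
  by apply: F_anti => // a' b' _; apply: F_anti => //; apply: iter_nonneg.
- change (F (F Y) a b <= F (F (X t.*2.+1)) a b).
  by apply: F_anti => // a' b' _; apply: F_anti.
Qed.

Lemma iter_sandwiched t n : (t.*2 <= n)%N -> sandwiched t (X n).
Proof.
elim: t n => [|t IH] n hn.
- move=> a b hab; split; first by case: (iter_bounds n a b).
  case: n {hn} => [|n] /=; first by have := iter_bounds 1 a b; simpl; lra.
  apply: F_anti => [? ? _|a' b' _]; first lra.
  by case: (iter_bounds n a' b').
- case: n hn => [|[|m]] //= hn; apply: (sandwiched_FF (Y := X m)); apply: IH.
  by rewrite doubleS in hn.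
Qed.

(* M = |V| z bounds every in_sum of messages bounded by z; q = M / (1 + M)
   is the contraction ratio. *)
Definition msg_bound : R := \big[Rplus/0]_(w : T) z.

Definition contraction : R := msg_bound / (1 + msg_bound).

Lemma msg_bound_nonneg : 0 <= msg_bound.
Proof. by apply: big_ind => //; [lra | move=> x y; lra | move=> *; lra]. Qed.

Lemma in_sum_le_bound Y u v : (forall a b, adj a b -> Y a b <= z) -> in_sum Y u v <= msg_bound.
Proof.
move=> HYz; rewrite /in_sum /msg_bound big_mkcond /=.
apply: (big_ind2 (fun x y => x <= y)) => //; [lra | move=> x1 x2 y1 y2; lra |].
by move=> w _; case: ifP => [/andP [h _]|_]; [apply: HYz; rewrite adj_sym | lra].
Qed.

Lemma contraction_bounds : 0 <= contraction < 1.
Proof.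
have hM := msg_bound_nonneg; rewrite /contraction; split.
- by apply: Rmult_le_pos => //; left; apply: Rinv_0_lt_compat; lra.
- by apply: (Rmult_lt_reg_r (1 + msg_bound)); [lra | field_simplify; lra].
Qed.

Lemma F_contract Y Y' s u v : msg_nonneg Y -> msg_nonneg Y' ->
  (forall a b, adj a b -> Y' a b <= z) -> 0 <= s ->
  (forall a b, adj a b -> (1 - s) * Y' a b <= Y a b) ->
  (1 - contraction * s) * F Y u v <= F Y' u v.
Proof.
move=> HY HY' HY'z hs Hratio; rewrite /zRmap !RmapE.
have hA := in_sum_nonneg HY' u v; have hB := in_sum_nonneg HY u v.
have hAM := in_sum_le_bound u v HY'z.
set A := in_sum Y' u v in hA hAM *; set B := in_sum Y u v in hB *.
have hAB : (1 - s) * A <= 1 * B.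
  by apply: in_sum_scale => a b hab; rewrite Rmult_1_l; apply: Hratio.
have hq : A * (1 - contraction) <= contraction.
  have hM := msg_bound_nonneg; rewrite /contraction.
  apply: (Rmult_le_reg_r (1 + msg_bound)); first lra.
  by field_simplify; lra.
have hkey : (1 - contraction * s) * (1 + A) <= 1 * (1 + B).
  have := Rmult_le_pos _ _ hs (ltac:(lra) : 0 <= contraction - A * (1 - contraction)).
  move=> h; nra.
have hA1 : 0 < 1 + A by lra.
have hB1 : 0 < 1 + B by lra.
have := frac_le hB1 hA1 hkey; nra.
Qed.

Lemma iter_gap_ratio t a b : adj a b ->
  (1 - contraction ^ t) * X t.*2.+1 a b <= X t.*2 a b.
Proof.
have [q0 q1] := contraction_bounds.
elim: t a b => [|t IH] a b hab; first by rewrite /=; lra.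
have hqt : 0 <= contraction ^ t <= 1.
  by split; [apply: pow_le | rewrite -(pow1 t); apply: pow_incr]; lra.
have step : (1 - contraction * contraction ^ t) * F (X t.*2) a b <= F (X t.*2.+1) a b.
  apply: F_contract; [exact: iter_nonneg | exact: iter_nonneg | | lra | exact: IH].
  by move=> a' b' _; case: (iter_bounds t.*2.+1 a' b').
have odd_dec : X (t.+1).*2.+1 a b <= X t.*2.+1 a b.
  by case: (iter_sandwiched (t := t) (n := (t.+1).*2.+1) ltac:(rewrite doubleS; lia) hab).
rewrite doubleS in odd_dec *; change (contraction ^ t.+1) with (contraction * contraction ^ t).
change ((1 - contraction * contraction ^ t) * X t.*2.+1 a b <= X t.*2.+2 a b) in step.
have : 0 <= 1 - contraction * contraction ^ t by nra.
nra.
Qed.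

Lemma iter_gap t a b : adj a b -> X t.*2.+1 a b - X t.*2 a b <= contraction ^ t * z.
Proof.
move=> hab; have := iter_gap_ratio t hab; have := iter_bounds t.*2.+1 a b.
have := pow_le _ t (proj1 contraction_bounds); nra.
Qed.

Lemma contraction_small eps : 0 < eps -> exists N, contraction ^ N * z < eps.
Proof.
move=> heps; have [q0 q1] := contraction_bounds.
have hq : Rabs contraction < 1 by rewrite Rabs_right; lra.
have [N HN] := pow_lt_1_zero _ hq (eps / z) ltac:(apply: Rdiv_lt_0_compat; lra).
exists N; have := HN N (le_n _); rewrite Rabs_right; last by apply: Rle_ge; apply: pow_le.
move=> h; apply: (Rmult_lt_reg_r (/ z)); first by apply: Rinv_0_lt_compat.
by rewrite Rmult_assoc Rinv_r; [rewrite Rmult_1_r | lra].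
Qed.

Lemma sandwich_unique Y Y' : (forall t, sandwiched t Y) -> (forall t, sandwiched t Y') ->
  forall a b, adj a b -> Y a b = Y' a b.
Proof.
move=> HY HY' a b hab; apply: Rminus_diag_uniq.
case: (Req_dec (Y a b - Y' a b) 0) => // hne; exfalso.
have [N HN] := contraction_small (Rabs_pos_lt _ hne).
have := HY N a b hab; have := HY' N a b hab; have := iter_gap N hab => h1 h2 h3.
have : Rabs (Y a b - Y' a b) <= contraction ^ N * z by apply: Rabs_le; lra.
lra.
Qed.

Lemma iter_cauchy a b : adj a b -> Cauchy_crit (fun n => X n a b).
Proof.
move=> hab eps heps; have [N HN] := contraction_small heps.
exists N.*2 => n m hn hm.
have [h1 h2] := iter_sandwiched (t := N) (n := n) ltac:(lia) hab.
have [h3 h4] := iter_sandwiched (t := N) (n := m) ltac:(lia) hab.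
by have := iter_gap N hab => h5; rewrite /Rdist; apply: Rabs_def1; lra.
Qed.

Lemma limit_sandwiched L : (forall a b, adj a b -> Un_cv (fun n => X n a b) (L a b)) ->
  forall t, sandwiched t L.
Proof.
move=> HL t a b hab; have Htail := CV_shift' _ t.*2 _ (HL a b hab).
have bounds n : X t.*2 a b <= X (n + t.*2)%coq_nat a b <= X t.*2.+1 a b.
  by apply: iter_sandwiched hab; lia.
split.
- exact: (Rle_cv_lim (fun n => proj1 (bounds n)) (cv_const _) Htail).
- exact: (Rle_cv_lim (fun n => proj2 (bounds n)) Htail (cv_const _)).
Qed.

Lemma fixed_point_sandwiched Y : msg_nonneg Y ->
  (forall a b, adj a b -> Y a b = F Y a b) -> forall t, sandwiched t Y.
Proof.
move=> HYn HY; elim=> [|t IH] a b hab.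
- split; first exact: HYn.
  rewrite HY //; apply: F_anti => [? ? _ /=|? ? h /=]; [lra | exact: HYn].
- have FY a' b' : adj a' b' -> F Y a' b' = Y a' b' by move=> h; rewrite -HY.
  have FFY : F (F Y) a b = Y a b.
    by rewrite [RHS]HY //; exact: (congr1 (Rmult z) (Rmap_ext FY a b)).
  by rewrite -FFY; apply: sandwiched_FF.
Qed.

Lemma sandwiched_F L : (forall t, sandwiched t L) -> forall t, sandwiched t (F L).
Proof.
move=> HL t a b hab; have HLn := sandwiched_nonneg (HL t).
have lo : msg_le (X t.*2) L by move=> ? ? h; case: (HL t _ _ h).
have hi : msg_le L (X t.*2.+1) by move=> ? ? h; case: (HL t _ _ h).
split; last by apply: F_anti => //; exact: iter_nonneg.
have [h _] := iter_sandwiched (t := t) (n := t.*2.+2) ltac:(lia) hab.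
by apply: (Rle_trans _ _ _ h); apply: F_anti.
Qed.

Definition attractive_solution (Y : T -> T -> R) : Prop :=
  (forall u v, adj u v -> 0 < Y u v /\ Y u v = F Y u v) /\
  (forall Y' : T -> T -> R,
     (forall u v, adj u v -> 0 <= Y' u v /\ Y' u v = F Y' u v) ->
     forall u v, adj u v -> Y' u v = Y u v) /\
  (forall u v, adj u v -> Un_cv (fun t => X t u v) (Y u v)).

(* The limit of the iterates is the attractive solution: it is a fixed point
   because it and its image under F are both sandwiched at every level. *)
Lemma attractive_solution_exists : exists Y, attractive_solution Y.
Proof.
pose L a b := epsilon (inhabits 0) (fun l => adj a b -> Un_cv (fun n => X n a b) l).
have limit_exists a b : exists l, adj a b -> Un_cv (fun n => X n a b) l.
  case hab: (adj a b); last by exists 0.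
  by have [l Hl] := R_complete _ (iter_cauchy hab); exists l.
have HL a b : adj a b -> Un_cv (fun n => X n a b) (L a b).
  exact: epsilon_spec (limit_exists a b).
have HLs := limit_sandwiched HL.
have HLfix : forall a b, adj a b -> L a b = F L a b.
  by apply: sandwich_unique => //; apply: sandwiched_F.
exists L; split; [|split] => //.
- move=> u v huv; split => //; rewrite HLfix //.
  exact: (proj1 (F_bounds u v (sandwiched_nonneg (HLs 0%N)))).
- move=> Y HY; apply: sandwich_unique => //.
  by apply: fixed_point_sandwiched => a b h; case: (HY a b h).
Qed.

End FixedActivity.

Lemma iter_mono_activity z1 z2 : 0 < z1 -> z1 <= z2 -> forall t a b,
  BP_iter adj z1 t a b <= BP_iter adj z2 t a b /\
  z1 * BP_iter adj z2 t a b <= z2 * BP_iter adj z1 t a b.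
Proof.
move=> h1 h12; elim=> [|t IH] a b /=; first lra.
set X1 := BP_iter adj z1 t; set X2 := BP_iter adj z2 t.
have X1_le_X2 : msg_le X1 X2 by move=> a' b' _; case: (IH a' b').
have A1_le_A2 := in_sum_le X1_le_X2 a b.
have scaled := @in_sum_scale X2 X1 z1 z2 (fun a' b' _ => proj2 (IH a' b')) a b.
have A1_nonneg : 0 <= in_sum X1 a b := in_sum_nonneg (iter_nonneg h1 t) a b.
rewrite /zRmap !RmapE; split; first by apply: frac_le; nra.
have h1' : 0 < 1 + in_sum X1 a b by lra.
have h2' : 0 < 1 + in_sum X2 a b by lra.
have key : z1 * z2 * (1 + in_sum X1 a b) <= z2 * z1 * (1 + in_sum X2 a b).
  by rewrite (Rmult_comm z2 z1); apply: Rmult_le_compat_l; nra.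
by have := frac_le h2' h1' key; rewrite !Rmult_assoc.
Qed.

Lemma attractive_solution_mono z1 z2 Y1 Y2 : 0 < z1 -> z1 <= z2 ->
  attractive_solution z1 Y1 -> attractive_solution z2 Y2 ->
  forall u v, adj u v -> Y1 u v <= Y2 u v /\ Y2 u v / z2 <= Y1 u v / z1.
Proof.
move=> h1 h12 [_ [_ cv1]] [_ [_ cv2]] u v huv.
have hm := iter_mono_activity h1 h12.
split; first exact: (Rle_cv_lim (fun n => proj1 (hm n u v)) (cv1 u v huv) (cv2 u v huv)).
have H : z1 * Y2 u v <= z2 * Y1 u v.
  exact: (Rle_cv_lim (fun n => proj2 (hm n u v))
            (CV_mult _ _ _ _ (cv_const z1) (cv2 u v huv))
            (CV_mult _ _ _ _ (cv_const z2) (cv1 u v huv))).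
have -> : Y2 u v / z2 = (z1 * Y2 u v) * / (z1 * z2) by field; lra.
have -> : Y1 u v / z1 = (z2 * Y1 u v) * / (z1 * z2) by field; lra.
by apply: Rmult_le_compat_r => //; left; apply: Rinv_0_lt_compat; nra.
Qed.

End Messages.

Section Matchings.
Variables (T : finType) (adj : rel T).
Hypothesis adj_sym : forall u v, adj u v = adj v u.
Hypothesis adj_irr : forall u, adj u u = false.

Lemma set2C (a b : T) : [set a; b] = [set b; a].
Proof. exact: setUC. Qed.

Lemma adj_neq x y : adj x y -> x != y.
Proof. by move=> h; apply/eqP => exy; move: h; rewrite exy adj_irr. Qed.

Lemma pair_inj (u v w : T) : u != v -> [set u; v] = [set u; w] -> v = w.
Proof.
move=> huv he; have : v \in [set u; w] by rewrite -he set22.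
by case/set2P => // evu; move: huv; rewrite evu eqxx.
Qed.

Lemma is_edgeP e : reflect (exists x y, adj x y /\ e = [set x; y]) (is_edge adj e).
Proof.
apply: (iffP existsP) => [[x /existsP [y /andP [h /eqP ->]]]|[x [y [h ->]]]].
- by exists x, y.
- by exists x; apply/existsP; exists y; rewrite h eqxx.
Qed.

Lemma edge_other (e : {set T}) x : is_edge adj e -> x \in e ->
  exists y, adj x y /\ e = [set x; y].
Proof.
move=> /is_edgeP [a [b [hab ->]]] /set2P [->|->]; first by exists b.
by exists a; rewrite adj_sym set2C.
Qed.

Lemma edge_nonempty (e : {set T}) : is_edge adj e -> exists x, x \in e.
Proof. by move=> /is_edgeP [x [y [_ ->]]]; exists x; rewrite set21. Qed.

Lemma pair_edge_adj (u w : T) : is_edge adj [set u; w] -> adj u w.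
Proof.
move=> he; have [y [huy e]] := edge_other he (set21 u w).
by rewrite -(pair_inj (adj_neq huy) (esym e)).
Qed.

Lemma matchingP M : is_matching adj M <->
  (forall e, e \in M -> is_edge adj e) /\
  (forall x e1 e2, e1 \in M -> e2 \in M -> x \in e1 -> x \in e2 -> e1 = e2).
Proof.
split.
- move=> /andP [/forallP H1 /forallP H2]; split.
  + by move=> e he; have := H1 e; rewrite he.
  + move=> x e1 e2 h1 h2 x1 x2; apply: (card_le1_eqP (H2 x)); by rewrite inE ?h1 ?h2 ?x1 ?x2.
- move=> [H1 H2]; apply/andP; split.
  + by apply/forallP => e; apply/implyP; exact: H1.
  + apply/forallP => x; apply/card_le1_eqP => e1 e2.
    by rewrite !inE => /andP [h1 x1] /andP [h2 x2]; exact: (H2 x).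
Qed.

Lemma matching_sub (M M' : {set {set T}}) :
  is_matching adj M -> M' \subset M -> is_matching adj M'.
Proof.
move=> /matchingP [H1 H2] /subsetP hs; apply/matchingP; split.
- by move=> e he; apply: H1; apply: hs.
- by move=> x e1 e2 h1 h2; apply: H2; apply: hs.
Qed.

Definition avoids (S : {set T}) (M : {set {set T}}) : bool :=
  [forall e in M, [forall x in e, x \notin S]].

Lemma avoidsP (S : {set T}) (M : {set {set T}}) :
  reflect (forall e x, e \in M -> x \in e -> x \notin S) (avoids S M).
Proof.
apply: (iffP forallP) => H.
- move=> e x he hx; have := H e; rewrite he /= => /forallP /(_ x); by rewrite hx.
- move=> e; apply/implyP => he; apply/forallP => x; apply/implyP => hx; exact: (H e x he hx).
Qed.

Lemma avoids0 (M : {set {set T}}) : avoids set0 M.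
Proof. by apply/avoidsP => e x _ _; rewrite in_set0. Qed.

Lemma avoidsU (S1 S2 : {set T}) (M : {set {set T}}) :
  avoids (S1 :|: S2) M = avoids S1 M && avoids S2 M.
Proof.
apply/idP/andP => [/avoidsP H|[/avoidsP H1 /avoidsP H2]].
- by split; apply/avoidsP => e x he hx; have := H e x he hx; rewrite in_setU negb_or => /andP [].
- by apply/avoidsP => e x he hx; rewrite in_setU negb_or (H1 e) ?(H2 e).
Qed.

Lemma avoids_setU (S : {set T}) (M1 M2 : {set {set T}}) :
  avoids S (M1 :|: M2) = avoids S M1 && avoids S M2.
Proof.
apply/idP/andP => [/avoidsP H|[/avoidsP H1 /avoidsP H2]].
- by split; apply/avoidsP => e x he hx; apply: (H e); rewrite // in_setU he ?orbT.
- by apply/avoidsP => e x /setUP [he|he] hx; [apply: (H1 e) | apply: (H2 e)].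
Qed.

Lemma avoids_compl (A : {set T}) (M : {set {set T}}) e : avoids (~: A) M -> e \in M -> e \subset A.
Proof.
move=> /avoidsP H he; apply/subsetP => x hx.
by have := H e x he hx; rewrite in_setC negbK.
Qed.

Lemma avoids_subset (S : {set T}) (M M' : {set {set T}}) :
  M' \subset M -> avoids S M -> avoids S M'.
Proof. by move=> /setUidPr <-; rewrite avoids_setU => /andP []. Qed.

Lemma matching_add_edge u w (S : {set T}) M : adj u w -> u \notin S -> w \notin S ->
  is_matching adj M -> avoids ([set u; w] :|: S) M ->
  [/\ is_matching adj ([set u; w] |: M), avoids S ([set u; w] |: M) & [set u; w] \notin M].
Proof.
move=> huw hu hw Hm Ha; move/matchingP: (Hm) => [H1 H2]; move/avoidsP: (Ha) => Ha'.
have off_e f x : f \in M -> x \in f -> x \in [set u; w] -> False.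
  by move=> hf hx hxe; have := Ha' f x hf hx; rewrite in_setU hxe.
have enM : [set u; w] \notin M by apply/negP => he; apply: (off_e _ u he); rewrite set21.
split => //.
- apply/matchingP; split.
  + by move=> f /setU1P [->|hf]; [apply/is_edgeP; exists u, w | apply: H1].
  + move=> x e1 e2 /setU1P [->|h1] /setU1P [->|h2] x1 x2 //.
    * by case: (off_e e2 x h2 x2 x1).
    * by case: (off_e e1 x h1 x1 x2).
    * exact: (H2 x).
- rewrite avoids_setU; move: Ha; rewrite avoidsU => /andP [_ ->].
  by rewrite andbT; apply/avoidsP => e x; rewrite in_set1 => /eqP -> /set2P [->|->].
Qed.

Lemma matching_remove_edge u w (S : {set T}) M :
  is_matching adj M -> avoids S M -> [set u; w] \in M ->
  is_matching adj (M :\ [set u; w]) && avoids ([set u; w] :|: S) (M :\ [set u; w]).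
Proof.
move=> Hm Ha he; have sub : M :\ [set u; w] \subset M by apply: subD1set.
rewrite (matching_sub Hm sub) avoidsU (avoids_subset sub Ha) andbT /=.
move/matchingP: Hm => [_ H2]; apply/avoidsP => f x /setD1P [hfe hf] hx.
by apply/negP => hxe; move: hfe; rewrite (H2 x f [set u; w]) ?eqxx.
Qed.

Definition edges_in (C : {set T}) (M : {set {set T}}) : {set {set T}} :=
  [set e in M | e \subset C].

Lemma edges_in_avoids (C : {set T}) M : avoids (~: C) (edges_in C M).
Proof.
apply/avoidsP => e x; rewrite inE => /andP [_ /subsetP sub] /sub.
by rewrite in_setC negbK.
Qed.

Lemma edges_in_setU (C : {set T}) M1 M2 :
  avoids (~: C) M1 -> avoids C M2 -> is_matching adj M2 -> edges_in C (M1 :|: M2) = M1.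
Proof.
move=> H1 /avoidsP H2 /matchingP [E2 _]; apply/setP => e; rewrite !inE.
case h1: (e \in M1); first by rewrite (avoids_compl H1 h1).
case h2: (e \in M2) => //=; apply/negP => /subsetP sub.
by have [x hx] := edge_nonempty (E2 e h2); have := H2 e x h2 hx; rewrite sub.
Qed.

Lemma matching_setU (C : {set T}) M1 M2 : avoids (~: C) M1 -> avoids C M2 ->
  is_matching adj (M1 :|: M2) = is_matching adj M1 && is_matching adj M2.
Proof.
move=> H1 /avoidsP H2; apply/idP/andP => [Hm|[/matchingP [E1 U1] /matchingP [E2 U2]]].
  by split; apply: (matching_sub Hm); [apply: subsetUl | apply: subsetUr].
have cross x e1 e2 : e1 \in M1 -> e2 \in M2 -> x \in e1 -> x \in e2 -> False.
  by move=> h1 h2 x1 x2; have := H2 e2 x h2 x2; rewrite (subsetP (avoids_compl H1 h1)).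
apply/matchingP; split; first by move=> e /setUP [h|h]; [apply: E1 | apply: E2].
move=> x e1 e2 /setUP [h1|h1] /setUP [h2|h2] x1 x2.
- exact: (U1 x).
- by case: (cross x e1 e2 h1 h2 x1 x2).
- by case: (cross x e2 e1 h2 h1 x2 x1).
- exact: (U2 x).
Qed.

(* C is a union of connected components of G - S. *)
Definition closed_off (S C : {set T}) : Prop :=
  forall x y, adj x y -> x \notin S -> y \notin S -> (x \in C) = (y \in C).

Lemma edges_in_cover (S C : {set T}) M : closed_off S C ->
  is_matching adj M -> avoids S M -> edges_in C M :|: edges_in (~: C) M = M.
Proof.
move=> HC /matchingP [H1 _] /avoidsP HA; apply/setP => e; rewrite in_setU !inE.
case he: (e \in M) => //=.
have [x [y [hxy ee]]] := is_edgeP _ (H1 e he).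
have hx : x \notin S by apply: (HA e); rewrite // ee set21.
have hy : y \notin S by apply: (HA e); rewrite // ee set22.
rewrite ee !subUset !sub1set !in_setC -(HC x y hxy hx hy).
by case: (x \in C).
Qed.

(* Splitting a matching avoiding S along C is a bijection onto pairs of
   matchings avoiding S u ~C and S u C: the bijection behind Zavoid_factor. *)
Lemma split_matching (S C : {set T}) (M1 M2 : {set {set T}}) :
  (is_matching adj (M1 :|: M2) && avoids S (M1 :|: M2))
    && ((edges_in C (M1 :|: M2), edges_in (~: C) (M1 :|: M2)) == (M1, M2))
  = (is_matching adj M1 && avoids (S :|: ~: C) M1)
    && (is_matching adj M2 && avoids (S :|: C) M2).
Proof.
rewrite avoids_setU !avoidsU; apply/idP/idP.
- move=> /andP [/andP [Hm /andP [HS1 HS2]] /eqP [E1 E2]].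
  rewrite HS1 HS2 (matching_sub Hm (subsetUl _ _)) (matching_sub Hm (subsetUr _ _)) /=.
  by apply/andP; split; [rewrite -E1 | rewrite -E2 -{1}(setCK C)]; exact: edges_in_avoids.
- move=> /andP [/and3P [Hm1 HS1 HC1] /and3P [Hm2 HS2 HC2]].
  have HC2' : avoids (~: ~: C) M2 by rewrite setCK.
  rewrite (matching_setU HC1 HC2) Hm1 Hm2 HS1 HS2 (edges_in_setU HC1 HC2 Hm2) setUC.
  by rewrite (edges_in_setU HC2' HC1 Hm1) eqxx.
Qed.

Definition deleted (u : T) : rel T := [rel a b | adj a b && (a != u) && (b != u)].

Lemma deleted_path_avoids (u : T) x p : path (deleted u) x p -> forall y, y \in p -> y != u.
Proof.
elim: p x => [|a p IH] x //= /andP [/andP [_ hau] hp] y.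
by rewrite in_cons => /orP [/eqP -> //|hy]; exact: (IH a hp).
Qed.

(* In a graph without cycles, distinct neighbours v, w of u are disconnected
   in G - u (otherwise u, v, ..., w would close a cycle). *)
Lemma tree_separates (u v w : T) : ~ has_cycle adj -> adj u v -> adj u w -> v != w ->
  ~~ connect (deleted u) v w.
Proof.
move=> Hnc huv huw hvw; apply/negP => /connectP [p hp ew].
move: ew; case: (shortenP hp) => p' hp' huniq _ ew.
apply: Hnc; exists [:: u, v & p']; split.
- rewrite /= in_cons negb_or (adj_neq huv) /=.
  have [hv1 hu1] : v \notin p' /\ uniq p' by apply/andP.
  rewrite hv1 hu1 !andbT; apply/negP => hu.
  by have := deleted_path_avoids hp' hu; rewrite eqxx.
- by case: p' hp' huniq ew => [|a p'] //= _ _ ew; move: hvw; rewrite ew eqxx.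
- rewrite /= rcons_path huv /=; apply/andP; split.
  + by apply: (sub_path _ hp') => a b /andP [/andP []].
  + by rewrite -ew adj_sym.
Qed.

Lemma component_closed (u v : T) (S : {set T}) : u \in S ->
  closed_off S [set x | connect (deleted u) v x].
Proof.
move=> huS x y hxy hx hy.
have hxu : x != u by apply: contraNneq hx => ->.
have hyu : y != u by apply: contraNneq hy => ->.
rewrite !inE; apply/idP/idP => h; apply: (connect_trans h); apply: connect1.
- by rewrite /deleted /= hxy hxu hyu.
- by rewrite /deleted /= adj_sym hxy hxu hyu.
Qed.

Lemma setU_absorb (A B : {set T}) x : x \in B -> (A :|: [set x]) :|: B = A :|: B.
Proof. by move=> hx; rewrite -setUA; congr (_ :|: _); apply/setUidPr; rewrite sub1set. Qed.

(* The vertex matched to u in M, or u itself when u is uncovered. *)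
Definition partner (u : T) (M : {set {set T}}) : T := odflt u [pick w | [set u; w] \in M].

Lemma partner_self (u : T) (S : {set T}) M : is_matching adj M ->
  (avoids S M && (partner u M == u)) = avoids (u |: S) M.
Proof.
move=> /matchingP [H1 _]; rewrite /partner avoidsU andbC.
case: pickP => [w hw|hnone] /=.
- rewrite eq_sym (negbTE (adj_neq (pair_edge_adj (H1 _ hw)))).
  apply/esym/negP => /andP [/avoidsP H _].
  by have := H _ u hw (set21 _ _); rewrite in_set1 eqxx.
- suff -> : avoids [set u] M by rewrite eqxx.
  apply/avoidsP => e x he hx; rewrite in_set1; apply/eqP => exu.
  rewrite exu in hx; have [y [_ ey]] := edge_other (H1 _ he) hx.
  by have := hnone y; rewrite -ey he.
Qed.

Lemma partner_other (u j : T) M : is_matching adj M -> j != u ->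
  (partner u M == j) = ([set u; j] \in M).
Proof.
move=> /matchingP [H1 H2] hju; rewrite /partner.
case: pickP => [w hw|hnone] /=; last by rewrite eq_sym (negbTE hju) (hnone j).
apply/idP/idP => [/eqP <- //|hj].
have huw := adj_neq (pair_edge_adj (H1 _ hw)).
by rewrite (pair_inj huw (H2 u _ _ hw hj (set21 _ _) (set21 _ _))).
Qed.

Section PartitionFunction.
Variable z : R.
Hypothesis z_pos : 0 < z.

Definition Zavoid (S : {set T}) : R :=
  \big[Rplus/0]_(M : {set {set T}} | is_matching adj M && avoids S M) z ^ #|M|.

Lemma matching_poly_Zavoid : matching_poly adj z = Zavoid set0.
Proof. by apply: eq_bigl => M; rewrite avoids0 andbT. Qed.

(* Zavoid S > 0, thanks to the empty matching. *)
Lemma Zavoid_pos (S : {set T}) : 0 < Zavoid S.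
Proof.
have empty : is_matching adj set0 && avoids S set0.
  apply/andP; split; last by apply/avoidsP => e x; rewrite in_set0.
  by apply/matchingP; split => [e|x e1 e2]; rewrite in_set0.
rewrite /Zavoid (bigD1 set0) //= cards0 /=; apply: Rplus_lt_le_0_compat; first lra.
by apply: big_ind => //; [lra | move=> x y; lra | move=> M _; apply: pow_le; lra].
Qed.

Lemma Zavoid_edge u w (S : {set T}) : adj u w -> u \notin S -> w \notin S ->
  \big[Rplus/0]_(M | is_matching adj M && avoids S M && ([set u; w] \in M)) z ^ #|M|
  = z * Zavoid ([set u; w] :|: S).
Proof.
move=> huw hu hw; set e := [set u; w].
rewrite (reindex_onto (fun M' => e |: M') (fun M => M :\ e)); last first.
  by move=> M /andP [_ he]; apply: setD1K.
rewrite /Zavoid big_distrr /=; apply: eq_big => M'.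
- apply/idP/idP => [/andP [/andP [/andP [Hm Ha] he] /eqP <-]|/andP [Hm Ha]].
  + exact: matching_remove_edge.
  + have [Hm' Ha' enM] := matching_add_edge huw hu hw Hm Ha.
    by rewrite Hm' Ha' setU11 setU1K // eqxx.
- move=> /andP [_ /eqP hD]; have enM : e \notin M' by rewrite -hD setD11.
  by rewrite cardsU1 enM add1n.
Qed.

(* Vertex recursion: classify matchings avoiding S by the partner of u. *)
Lemma Zavoid_vertex u (S : {set T}) : u \notin S ->
  Zavoid S = Zavoid (u |: S) +
    \big[Rplus/0]_(w | adj u w && (w \notin S)) (z * Zavoid ([set u; w] :|: S)).
Proof.
move=> huS; rewrite {1}/Zavoid (partition_big (partner u) xpredT) //.
rewrite (bigD1 u) //=; congr (_ + _).
  by apply: eq_bigl => M; case hM: (is_matching adj M) => //=; rewrite partner_self.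
rewrite big_mkcond [RHS]big_mkcond; apply: eq_bigr => j _ /=.
case: (eqVneq j u) => [->|hju] /=; first by rewrite adj_irr.
rewrite (eq_bigl (fun M => is_matching adj M && avoids S M && ([set u; j] \in M))); last first.
  by move=> M; case hM: (is_matching adj M) => //=; rewrite partner_other.
case: ifP => [/andP [huj hj]|hn]; first exact: Zavoid_edge.
apply: big_pred0 => M; apply/negP => /andP [/andP [/matchingP [H1 _] /avoidsP hA] hin].
have huj := pair_edge_adj (H1 _ hin); have hj := hA _ j hin (set22 _ _).
by move: hn; rewrite huj hj.
Qed.

Lemma Zavoid_factor (S C : {set T}) : closed_off S C ->
  Zavoid S = Zavoid (S :|: ~: C) * Zavoid (S :|: C).
Proof.
move=> HC; rewrite /Zavoid big_distrlr /= pair_big /=.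
rewrite (reindex_onto (fun p : {set {set T}} * {set {set T}} => p.1 :|: p.2)
                      (fun M => (edges_in C M, edges_in (~: C) M))); last first.
  by move=> M /andP [Hm Ha]; exact: edges_in_cover HC Hm Ha.
apply: eq_big => [[M1 M2]|[M1 M2]] /=; first exact: split_matching.
rewrite split_matching !avoidsU => /andP [/and3P [Hm1 _ HC1] /and3P [_ _ HC2]].
have disjoint : M1 :&: M2 = set0.
  apply/setP => e; rewrite inE in_set0; apply/negP => /andP [h1 h2].
  move/matchingP: Hm1 => [E1 _]; have [x hx] := edge_nonempty (E1 e h1).
  by move/avoidsP: HC2 => /(_ e x h2 hx); rewrite (subsetP (avoids_compl HC1 h1)).
by rewrite cardsU disjoint cards0 subn0 pow_add.
Qed.

Definition branch_sum (u v : T) : R :=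
  \big[Rplus/0]_(w | adj u w && (w != v)) (z * Zavoid ([set u; w] :|: [set v])).

Lemma Zavoid_neighbour (u v : T) : u != v -> Zavoid [set v] = Zavoid [set u; v] + branch_sum u v.
Proof.
move=> huv; rewrite (@Zavoid_vertex u [set v]); last by rewrite in_set1.
by congr (_ + _); apply: eq_bigl => w; rewrite in_set1.
Qed.

Lemma branch_sum_nonneg (u v : T) : 0 <= branch_sum u v.
Proof.
apply: big_ind => //; [lra | move=> x y; lra |].
by move=> w _; have := Zavoid_pos ([set u; w] :|: [set v]); nra.
Qed.

Lemma edge_weight (u v : T) : adj u v ->
  \big[Rplus/0]_(M : {set {set T}} | is_matching adj M && ([set u; v] \in M)) z ^ #|M|
  = z * Zavoid [set u; v].
Proof.
move=> huv; have E := @Zavoid_edge u v set0 huv; rewrite setU0 in E; rewrite -E ?in_set0 //.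
by apply: eq_bigl => M; rewrite avoids0 andbT.
Qed.

Definition tree_msg (u v : T) : R := z * Zavoid [set u; v] / Zavoid [set v].

Lemma tree_msg_pos (u v : T) : 0 < tree_msg u v.
Proof.
have := Zavoid_pos [set u; v]; have := Zavoid_pos [set v] => h1 h2.
by apply: Rdiv_lt_0_compat => //; nra.
Qed.

Section Tree.
Hypothesis acyclic : ~ has_cycle adj.

(* Applying Zavoid_factor to the component C of v in G - u, with w outside C. *)
Lemma tree_factor (u v w : T) : adj u v -> adj u w -> v != w ->
  Zavoid [set u; v] * Zavoid [set u; w] = Zavoid [set u] * Zavoid ([set u; w] :|: [set v]).
Proof.
move=> huv huw hvw; set C := [set x | connect (deleted u) v x].
have hvC : v \in C by rewrite inE connect0.
have hwC : w \in ~: C by rewrite in_setC inE; exact: tree_separates.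
have split (S : {set T}) : u \in S -> Zavoid S = Zavoid (S :|: ~: C) * Zavoid (S :|: C).
  by move=> huS; apply: Zavoid_factor; apply: component_closed.
rewrite (split [set u; v]) ?set21 // (split [set u; w]) ?set21 // (split [set u]) ?set11 //.
rewrite (split ([set u; w] :|: [set v])); last by rewrite !inE eqxx.
rewrite !(setU_absorb _ hvC) (setU_absorb _ hwC) (setUAC [set u] [set w] [set v]).
rewrite (setU_absorb _ hwC); ring.
Qed.

(* By tree_factor, each incoming message contributes one term of branch_sum. *)
Lemma in_sum_tree_msg (u v : T) : adj u v ->
  in_sum adj tree_msg u v = branch_sum u v / Zavoid [set u; v].
Proof.
move=> huv; rewrite /in_sum /branch_sum /Rdiv big_distrl /=.
apply: eq_bigr => w /andP [huw hwv]; rewrite /tree_msg (set2C w u).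
have hf := tree_factor huv huw (ltac:(by rewrite eq_sym) : v != w).
have ha := Zavoid_pos [set u]; have hc := Zavoid_pos [set u; v].
apply: (Rmult_eq_reg_r (Zavoid [set u] * Zavoid [set u; v])); last by nra.
have -> : z * Zavoid [set u; w] / Zavoid [set u] * (Zavoid [set u] * Zavoid [set u; v]) =
          z * (Zavoid [set u; v] * Zavoid [set u; w]) by field; lra.
by rewrite hf; field; lra.
Qed.

Lemma Rmap_tree_msg (u v : T) : adj u v ->
  Rmap adj tree_msg u v = Zavoid [set u; v] / Zavoid [set v].
Proof.
move=> huv; rewrite RmapE in_sum_tree_msg // (Zavoid_neighbour (adj_neq huv)).
have := Zavoid_pos [set u; v]; have := branch_sum_nonneg u v => h1 h2.
by field; lra.
Qed.

Lemma tree_msg_fixed (u v : T) : adj u v -> tree_msg u v = zRmap adj z tree_msg u v.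
Proof. by move=> huv; rewrite /zRmap Rmap_tree_msg // /tree_msg /Rdiv Rmult_assoc. Qed.

Lemma Zavoid_set0_identity (u v : T) : adj u v ->
  Zavoid set0 * Zavoid [set u; v] =
  Zavoid [set u] * Zavoid [set v] + z * Zavoid [set u; v] * Zavoid [set u; v].
Proof.
move=> huv; set a := Zavoid [set u]; set c := Zavoid [set u; v].
set D := \big[Rplus/0]_(w | adj u w && (w != v)) (z * Zavoid [set u; w]).
have expand_at_u : Zavoid set0 = a + (z * c + D).
  rewrite (@Zavoid_vertex u set0) ?in_set0 // setU0 (bigD1 v) /=; last by rewrite huv in_set0.
  rewrite setU0; congr (_ + (_ + _)).
  by apply: eq_big => [w|w _]; rewrite ?in_set0 ?andbT ?setU0.
have branches : c * D = a * branch_sum u v.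
  rewrite /D /branch_sum !big_distrr /=; apply: eq_bigr => w /andP [huw hwv].
  have := tree_factor huv huw (ltac:(by rewrite eq_sym) : v != w).
  by rewrite -/a -/c => hf; rewrite Rmult_comm Rmult_assoc (Rmult_comm _ c) hf; ring.
rewrite expand_at_u (Zavoid_neighbour (adj_neq huv)) -/c; nra.
Qed.

Lemma tree_edge_marginal (u v : T) : adj u v ->
  edge_prob adj z [set u; v] =
  tree_msg u v * Rmap adj tree_msg v u / (1 + tree_msg u v * Rmap adj tree_msg v u).
Proof.
move=> huv; have hvu : adj v u by rewrite adj_sym.
rewrite /edge_prob edge_weight // matching_poly_Zavoid (Rmap_tree_msg hvu) (set2C v u) /tree_msg.
have ident := Zavoid_set0_identity huv.
have := Zavoid_pos [set u]; have := Zavoid_pos [set v]; have := Zavoid_pos [set u; v].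
have := Zavoid_pos set0.
set a := Zavoid [set u]; set b := Zavoid [set v]; set c := Zavoid [set u; v].
move=> h0 hc hb ha.
have -> : Zavoid set0 = (a * b + z * c * c) / c by rewrite -ident -/c; field; lra.
field; repeat split; nra.
Qed.

End Tree.

End PartitionFunction.
End Matchings.

Theorem proposition6 (T : finType) (adj : rel T) (HG : simple_graph adj) :
  exists Y : R -> T -> T -> R,
    (* (i) existence of a positive solution, uniqueness among nonnegative
       solutions, attractivity of the iteration from 0 *)
    (forall z, 0 < z ->
       (forall u v, adj u v -> 0 < Y z u v /\ Y z u v = zRmap adj z (Y z) u v) /\
       (forall X : T -> T -> R,
          (forall u v, adj u v -> 0 <= X u v /\ X u v = zRmap adj z X u v) ->
          forall u v, adj u v -> X u v = Y z u v) /\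
       (forall u v, adj u v -> Un_cv (fun t => BP_iter adj z t u v) (Y z u v))) /\
    (* (ii) monotonicity *)
    (forall z1 z2, 0 < z1 -> z1 <= z2 -> forall u v, adj u v ->
       Y z1 u v <= Y z2 u v /\ Y z2 u v / z2 <= Y z1 u v / z1) /\
    (* (iii) edge marginals on trees *)
    (is_tree adj -> forall z, 0 < z -> forall u v, adj u v ->
       edge_prob adj z [set u; v] =
         Y z u v * Rmap adj (Y z) v u / (1 + Y z u v * Rmap adj (Y z) v u)).
Proof.
case: HG => adj_sym adj_irr.
pose Y z := epsilon (inhabits (fun _ _ : T => 0)) (attractive_solution adj z).
have HY z : 0 < z -> attractive_solution adj z (Y z).
  by move=> hz; apply: epsilon_spec; exact: attractive_solution_exists.
exists Y; split; [exact: HY | split].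
- move=> z1 z2 h1 h12; apply: attractive_solution_mono => //; apply: HY; lra.
- move=> [_ acyclic] z hz u v huv; have [_ [unique _]] := HY z hz.
  have msgE : forall a b, adj a b -> tree_msg adj z a b = Y z a b.
    apply: (unique (tree_msg adj z)) => a b hab; split.
    - exact: Rlt_le (tree_msg_pos adj hz a b).
    - exact (tree_msg_fixed adj_sym adj_irr hz acyclic hab).
  by rewrite (tree_edge_marginal adj_sym adj_irr hz acyclic huv) msgE // (Rmap_ext adj_sym msgE).
Qed.
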